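(* Let $(X,d)$ be a purely $n$-unrectifiable compact metric space with $\mathcal{H}^n(X)<\infty$. Then for any $\epsilon>0$ there exist $m\in\mathbb{N}$ and a $(2\sqrt{n}+1)$-Lipschitz function $\sigma\colon X\to\ell_\infty^m$ such that $\mathcal{H}^n(\sigma(X))<\infty$ and, for all $x,y\in X$, $|d(x,y)-\|\sigma(x)-\sigma(y)\|_\infty|<\epsilon$.
   Context: $\ell_\infty^m$ is $\mathbb{R}^m$ with the maximum norm $\|\cdot\|_\infty$. $\mathcal{H}^n$ is $n$-dimensional Hausdorff measure. A Borel $E\subset X$ is $n$-rectifiable if there are countably many $A_i\subset\mathbb{R}^n$ and Lipschitz $f_i\colon A_i\to X$ with $\mathcal{H}^n(E\setminus\bigcup_i f_i(A_i))=0$; $X$ is purely $n$-unrectifiable if $\mathcal{H}^n(E)=0$ for every $n$-rectifiable $E\subset X$. *)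

From HB Require Import structures.
From mathcomp Require Import all_boot all_order all_algebra.
From mathcomp Require Import all_classical all_reals all_analysis.
Set Implicit Arguments. Unset Strict Implicit. Unset Printing Implicit Defensive.
Import Order.TTheory GRing.Theory Num.Theory.
Local Open Scope classical_set_scope.
Local Open Scope ring_scope.

Section MetricDefs.
Variable R : realType.

Definition is_metric (T : Type) (d : T -> T -> R) : Prop :=
  [/\ (forall x y, 0 <= d x y),
      (forall x y, d x y = 0 <-> x = y),
      (forall x y, d x y = d y x) &
      (forall x y z, d x z <= d x y + d y z)].

Definition mball (T : Type) (d : T -> T -> R) (x : T) (r : R) : set T :=
  [set y | d x y < r].

Definition mopen (T : Type) (d : T -> T -> R) (A : set T) : Prop :=
  forall x, A x -> exists2 r : R, 0 < r & mball d x r `<=` A.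

Definition mcompact (T : Type) (d : T -> T -> R) : Prop :=
  forall (I : Type) (U : I -> set T), (forall i, mopen d (U i)) ->
    setT `<=` \bigcup_i U i ->
    exists2 F : set I, finite_set F & setT `<=` \bigcup_(i in F) U i.

Definition mborel (T : Type) (d : T -> T -> R) (E : set T) : Prop :=
  smallest (sigma_algebra setT) (mopen d) E.

(* diameter, in the extended reals; diam of the empty set is 0 *)
Definition mdiam (T : Type) (d : T -> T -> R) (A : set T) : \bar R :=
  ereal_sup ([set 0%E] `|` [set (d x y)%:E | x in A & y in A]).

(* contribution diam(C)^s of a covering set, with the convention that the
   empty set contributes 0 (so that H^0 is counting measure) *)
Definition hcontrib (T : Type) (d : T -> T -> R) (s : nat) (C : set T) : \bar R :=
  if asbool (C = set0) then 0%E else expe (mdiam d C) s.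

(* H^s_delta (unnormalised) *)
Definition hausdorff_delta (T : Type) (d : T -> T -> R) (s : nat) (delta : R)
  (E : set T) : \bar R :=
  ereal_inf [set (\sum_(0 <= i <oo) hcontrib d s (C i))%E |
     C in [set C : nat -> set T |
            E `<=` \bigcup_i C i /\ forall i, (mdiam d (C i) <= delta%:E)%E]].

Definition hausdorff (T : Type) (d : T -> T -> R) (s : nat) (E : set T) : \bar R :=
  ereal_sup [set hausdorff_delta d s delta E | delta in [set delta : R | 0 < delta]].

Definition eucl_dist (n : nat) (a b : 'rV[R]_n) : R :=
  Num.sqrt (\sum_(i < n) (a ord0 i - b ord0 i) ^+ 2).

Definition linf_dist (m : nat) (a b : 'rV[R]_m) : R :=
  \big[Num.max/0]_(i < m) `|a ord0 i - b ord0 i|.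

Definition lipschitz_on (T U : Type) (dT : T -> T -> R) (dU : U -> U -> R)
  (A : set T) (f : T -> U) : Prop :=
  exists L : R, forall a b, A a -> A b -> dU (f a) (f b) <= L * dT a b.

Definition rectifiable (T : Type) (d : T -> T -> R) (n : nat) (E : set T) : Prop :=
  mborel d E /\
  exists (A : nat -> set 'rV[R]_n) (f : nat -> 'rV[R]_n -> T),
    (forall i, lipschitz_on (@eucl_dist n) d (A i) (f i)) /\
    hausdorff d n (E `\` \bigcup_i (f i @` A i)) = 0%E.

Definition purely_unrectifiable (T : Type) (d : T -> T -> R) (n : nat) : Prop :=
  forall E : set T, rectifiable d n E -> hausdorff d n E = 0%E.

End MetricDefs.

(** Compactness provides a finite [eps/2]-net [g_1, ..., g_k] of [X], and the
    map [x |-> (d(x, g_j))_j] into [l_infty^k] is 1-Lipschitz by the triangle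
    inequality.  It distorts distances by less than [eps]: if [d(g_j, x) < eps/2]
    then the [j]-th coordinate alone gives
    [|d(x, g_j) - d(y, g_j)| >= d(x, y) - 2 d(g_j, x)].  A 1-Lipschitz map does
    not increase [H^n], so [H^n(sigma(X)) <= H^n(X) < +oo]. *)
From HB Require Import structures.
From mathcomp Require Import all_boot all_order all_algebra.
From mathcomp Require Import all_classical all_reals all_analysis.
From mathcomp Require Import lra.
Set Implicit Arguments. Unset Strict Implicit. Unset Printing Implicit Defensive.
Import Order.TTheory GRing.Theory Num.Theory.
Local Open Scope classical_set_scope.
Local Open Scope ring_scope.

Lemma finite_set_enum (T : Type) (F : set T) :
  finite_set F -> exists k (g : 'I_k -> T), F = range g.
Proof.
move=> [k Fk]; have [->|F0] := eqVneq F set0.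
  exists 0%N, (fun i : 'I_0 => False_rect T (notF (ltn_ord i))).
  by apply/seteqP; split=> [//|_ [[]] //].
have [g [_ _]] := finite_set_bij F0 Fk (@subset_refl _ F).
exists k, (fun j : 'I_k => g (val j)); apply/seteqP; split.
  by move=> x /(@surj _ _ _ _ g)[j jk <-]; exists (Ordinal jk).
by move=> _ [j _ <-]; apply: funS; exact: ltn_ord.
Qed.

Lemma leeXn2r (R : realDomainType) (a b : \bar R) k :
  (0 <= a)%E -> (a <= b)%E -> (a ^+ k <= b ^+ k)%E.
Proof.
move=> a0 ab; elim: k => [|k IH]; first by rewrite !expe0.
by rewrite !expeS; apply: lee_pmul => //; exact: expe_ge0.
Qed.

Lemma mdiam_ge0 (R : realType) (T : Type) (d : T -> T -> R) (C : set T) :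
  (0 <= mdiam d C)%E.
Proof. by apply: ereal_sup_ubound; left. Qed.

Lemma hcontrib_ge0 (R : realType) (T : Type) (d : T -> T -> R) s (C : set T) :
  (0 <= hcontrib d s C)%E.
Proof. by rewrite /hcontrib; case: ifP => // _; exact/expe_ge0/mdiam_ge0. Qed.

Section HausdorffImage.
Variables (R : realType) (T U : Type) (dT : T -> T -> R) (dU : U -> U -> R).
Variable f : T -> U.
Hypothesis f_contract : forall x y, dU (f x) (f y) <= dT x y.

Lemma mdiam_image_le C : (mdiam dU (f @` C) <= mdiam dT C)%E.
Proof.
apply: ge_ereal_sup => _ [->|[_ [x Cx <-] [_ [y Cy <-] <-]]].
  exact: mdiam_ge0.
apply: le_trans (_ : (dT x y)%:E <= _)%E; first by rewrite lee_fin.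
by apply: ereal_sup_ubound; right; exists x => //; exists y.
Qed.

Lemma hcontrib_image_le s C : (hcontrib dU s (f @` C) <= hcontrib dT s C)%E.
Proof.
rewrite /hcontrib; case: ifPn => [_|/asboolPn fC0]; first exact: hcontrib_ge0.
case: ifPn => [/asboolP C0|_]; first by rewrite C0 image_set0 in fC0.
by apply: leeXn2r; [exact: mdiam_ge0|exact: mdiam_image_le].
Qed.

Lemma hausdorff_delta_image_le s delta E :
  (hausdorff_delta dU s delta (f @` E) <= hausdorff_delta dT s delta E)%E.
Proof.
apply/ereal_infP => _ [C [EC Cdelta] <-].
apply: le_trans (_ : (\sum_(0 <= i <oo) hcontrib dU s (f @` C i) <= _)%E).
  apply: ereal_inf_lbound; exists (fun i => f @` C i) => //; split.
    move=> _ [x Ex <-]; have [i _ Cix] := EC x Ex; exists i => //; exists x.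
  by move=> i; apply: le_trans (Cdelta i); exact: mdiam_image_le.
apply: lee_nneseries => [i _ _|i _]; first exact: hcontrib_ge0.
exact: hcontrib_image_le.
Qed.

Lemma hausdorff_image_le s E : (hausdorff dU s (f @` E) <= hausdorff dT s E)%E.
Proof.
apply: ge_ereal_sup => _ [delta delta_gt0 <-].
apply: le_trans (hausdorff_delta_image_le _ _ _) _.
by apply: ereal_sup_ubound; exists delta.
Qed.

End HausdorffImage.

Section LinfDist.
Variables (R : realType) (m : nat).
Implicit Types a b : 'rV[R]_m.

Lemma linf_dist_le a b M : 0 <= M ->
  (forall k, `|a ord0 k - b ord0 k| <= M) -> linf_dist a b <= M.
Proof. by move=> M_ge0 abM; apply: bigmax_le => // k _; exact: abM. Qed.

Lemma le_linf_dist a b k : `|a ord0 k - b ord0 k| <= linf_dist a b.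
Proof. exact: (le_bigmax _ (fun k => `|a ord0 k - b ord0 k|)). Qed.

End LinfDist.

Section MetricNet.
Variables (R : realType) (X : Type) (d : X -> X -> R).
Hypothesis d_metric : is_metric d.

Lemma mball_mopen x r : mopen d (mball d x r).
Proof.
have [_ _ _ d_tri] := d_metric.
move=> y; rewrite /mball /= => xy; exists (r - d x y); first by rewrite subr_gt0.
by move=> z; rewrite /mball /= => yz; have := d_tri x y z; lra.
Qed.

Lemma mcompact_finite_net r : mcompact d -> 0 < r ->
  exists k (g : 'I_k -> X), forall x, exists j, d (g j) x < r.
Proof.
have [_ d_eq0 _ _] := d_metric.
move=> X_compact r_gt0.
have balls_cover : setT `<=` \bigcup_y mball d y r.
  by move=> x _; exists x => //; rewrite /mball /= (proj2 (d_eq0 x x) erefl).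
have [F /finite_set_enum[k [g ->]] cover] :=
  X_compact X (fun y => mball d y r) (fun y => mball_mopen (x:=y) (r:=r))
    balls_cover.
by exists k, g => x; have [_ [j _ <-] gjx] := cover x I; exists j.
Qed.

Lemma dist_diff_le x y z : `|d x z - d y z| <= d x y.
Proof.
have [_ _ d_sym d_tri] := d_metric.
rewrite ler_norml; apply/andP; split.
  by have := d_tri y x z; rewrite (d_sym y x); lra.
by have := d_tri x y z; lra.
Qed.

Definition dist_row k (g : 'I_k -> X) (x : X) : 'rV[R]_k := \row_j d x (g j).

Lemma linf_dist_row_le k (g : 'I_k -> X) x y :
  linf_dist (dist_row g x) (dist_row g y) <= d x y.
Proof.
have [d_ge0 _ _ _] := d_metric.
by apply: linf_dist_le => // j; rewrite !mxE; exact: dist_diff_le.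
Qed.

Lemma linf_dist_row_ge k (g : 'I_k -> X) j x y :
  d x y - 2 * d (g j) x <= linf_dist (dist_row g x) (dist_row g y).
Proof.
have [_ _ d_sym d_tri] := d_metric.
apply: le_trans (le_linf_dist _ _ j); rewrite !mxE ler_normr; apply/orP; right.
by have := d_tri x (g j) y; rewrite (d_sym x (g j)) (d_sym y (g j)); lra.
Qed.

End MetricNet.

Theorem theorem1p6 (R : realType) (X : Type) (d : X -> X -> R) (n : nat) :
  is_metric d -> mcompact d -> purely_unrectifiable d n ->
  (hausdorff d n setT < +oo)%E ->
  forall eps : R, 0 < eps ->
  exists (m : nat) (sigma : X -> 'rV[R]_m),
    (forall x y, linf_dist (sigma x) (sigma y)
                 <= (2 * Num.sqrt (n%:R) + 1) * d x y) /\
    (hausdorff (@linf_dist R m) n (sigma @` setT) < +oo)%E /\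
    (forall x y, `| d x y - linf_dist (sigma x) (sigma y) | < eps).
Proof.
move=> d_metric X_compact _ X_finite eps eps_gt0.
have [d_ge0 _ _ _] := d_metric.
have [k [g net]] := mcompact_finite_net d_metric X_compact
  (divr_gt0 eps_gt0 (ltr0n R 2)).
exists k, (dist_row d g).
have sigma_contract := linf_dist_row_le d_metric g.
split; [|split].
- move=> x y; apply: le_trans (sigma_contract x y) _.
  by have := d_ge0 x y; have := sqrtr_ge0 (n%:R : R); nra.
- by apply: le_lt_trans X_finite; exact: hausdorff_image_le.
- move=> x y; have [j gjx] := net x.
  rewrite ger0_norm ?subr_ge0 //.
  by have := linf_dist_row_ge d_metric g j x y; lra.
Qed.
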